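(* There is an absolute constant $A \geq 1$ such that the following holds. Let $L = \{(ay+b,y,\tfrac{1}{2}by+c) : y \in \mathbb{R}\}$ with $a,b,c \in \mathbb{R}$ be a horizontal line, and define $i_{L}(x,y,t) := (ay+b,y,\tfrac{1}{2}by+c)$. Then $$d((x,y,t),i_{L}(x,y,t)) \leq A(1+|a|)\operatorname{dist}((x,y,t),L), \qquad (x,y,t) \in \mathbb{H}.$$
   Context: $\mathbb{H}$ is $\mathbb{R}^{3}$ with group law $(x_{1},y_{1},t_{1}) \cdot (x_{2},y_{2},t_{2}) = (x_{1}+x_{2},y_{1}+y_{2},t_{1}+t_{2}+\tfrac{1}{2}(x_{1}y_{2}-x_{2}y_{1}))$ and metric $d(p,q) = \|q^{-1}\cdot p\|$ with $\|(x,y,t)\| = \max\{\sqrt{x^{2}+y^{2}},\sqrt{|t|}\}$; $\operatorname{dist}$ is w.r.t. $d$. *)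

From Stdlib Require Import Reals.
From Coquelicot Require Import Coquelicot.
Open Scope R_scope.

Definition H := (R * R * R)%type.

Definition hx (p : H) : R := fst (fst p).
Definition hy (p : H) : R := snd (fst p).
Definition ht (p : H) : R := snd p.

Definition hmul (p q : H) : H :=
  (hx p + hx q, hy p + hy q,
   ht p + ht q + / 2 * (hx p * hy q - hx q * hy p)).

Definition hinv (p : H) : H := (- hx p, - hy p, - ht p).

Definition hnorm (p : H) : R :=
  Rmax (sqrt (hx p ^ 2 + hy p ^ 2)) (sqrt (Rabs (ht p))).

Definition hdist (p q : H) : R := hnorm (hmul (hinv q) p).

Definition line_pt (a b c y : R) : H := (a * y + b, y, / 2 * b * y + c).

Definition hline (a b c : R) (q : H) : Prop := exists y : R, q = line_pt a b c y.

Definition hdist_set (p : H) (S : H -> Prop) : R :=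
  real (Glb_Rbar (fun r => exists q, S q /\ r = hdist p q)).

Definition iL (a b c : R) (p : H) : H := line_pt a b c (hy p).

(* Horizontal lines are left cosets of horizontal subgroups: for [q] on [L]
   and [g = q^{-1} p] with [y]-coordinate [h], one has [i_L(p) = q (a h, h, 0)],
   hence [i_L(p)^{-1} p = (-a h, -h, 0) g].  This left multiplication kills the
   [y]-coordinate, moves [x] by [a h] and [t] by [h X / 2] (with [X] the new
   [x]-coordinate), so it enlarges the norm by at most [2 (1 + |a|)].  Thus
   [A = 2] works after taking the infimum over [q]. *)

From Stdlib Require Import Reals Lra Psatz.
From Coquelicot Require Import Coquelicot.
Open Scope R_scope.

Lemma hnorm_ge0 (g : H) : 0 <= hnorm g.
Proof. eapply Rle_trans; [apply sqrt_pos | apply Rmax_r]. Qed.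

Lemma Rabs_hx_le_hnorm (g : H) : Rabs (hx g) <= hnorm g.
Proof.
  eapply Rle_trans; [| apply Rmax_l].
  eapply Rle_trans; [apply Rmax_l | apply sqrt_plus_sqr].
Qed.

Lemma Rabs_hy_le_hnorm (g : H) : Rabs (hy g) <= hnorm g.
Proof.
  eapply Rle_trans; [| apply Rmax_l].
  eapply Rle_trans; [apply Rmax_r | apply sqrt_plus_sqr].
Qed.

Lemma Rabs_ht_le_hnorm_sqr (g : H) : Rabs (ht g) <= hnorm g * hnorm g.
Proof.
  rewrite <- (sqrt_sqrt (Rabs (ht g))) by apply Rabs_pos.
  assert (Ht : sqrt (Rabs (ht g)) <= hnorm g) by apply Rmax_r.
  pose proof (sqrt_pos (Rabs (ht g))).
  nra.
Qed.

Lemma hnorm_le (g : H) (M : R) :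
  0 <= M -> hx g ^ 2 + hy g ^ 2 <= M * M -> Rabs (ht g) <= M * M ->
  hnorm g <= M.
Proof.
  intros HM Hxy Ht.
  apply Rmax_lub; rewrite <- (sqrt_square M) by exact HM;
    apply sqrt_le_1_alt; assumption.
Qed.

Lemma hmul_hinv_iL (a b c s : R) (p : H) :
  let g := hmul (hinv (line_pt a b c s)) p in
  hmul (hinv (iL a b c p)) p = hmul (- (a * hy g), - hy g, 0) g.
Proof.
  destruct p as [[x y] t].
  unfold hmul, hinv, iL, line_pt, hx, hy, ht; simpl.
  f_equal; [f_equal |]; field.
Qed.

Lemma hnorm_hmul_horizontal_shear (a : R) (g : H) :
  hnorm (hmul (- (a * hy g), - hy g, 0) g) <= 2 * (1 + Rabs a) * hnorm g.
Proof.
  assert (HD := hnorm_ge0 g).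
  assert (Hx := Rabs_hx_le_hnorm g).
  assert (Hy := Rabs_hy_le_hnorm g).
  assert (Ht := Rabs_ht_le_hnorm_sqr g).
  set (D := hnorm g) in *.
  destruct g as [[x y] t]; cbn [hx hy ht fst snd] in *.
  set (X := x - a * y).
  assert (Ha := Rabs_pos a).
  assert (HX : Rabs X <= (1 + Rabs a) * D).
  { unfold X. eapply Rle_trans; [apply Rabs_triang |].
    rewrite Rabs_Ropp, Rabs_mult.
    assert (Rabs a * Rabs y <= Rabs a * D) by (apply Rmult_le_compat_l; lra).
    lra. }
  assert (HyX : Rabs y * Rabs X <= D * ((1 + Rabs a) * D)).
  { apply Rmult_le_compat; try apply Rabs_pos; lra. }
  assert (HX0 := Rabs_pos X).
  apply hnorm_le; cbn [hmul hx hy ht fst snd].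
  - nra.
  - replace (- (a * y) + x) with X by (unfold X; ring).
    replace (X ^ 2) with (Rsqr (Rabs X)) by (rewrite <- Rsqr_abs; unfold Rsqr; ring).
    replace (- y + y) with 0 by ring.
    unfold Rsqr. nra.
  - replace (0 + t + / 2 * (- (a * y) * y - x * - y))
      with (t + / 2 * (y * X)) by (unfold X; ring).
    eapply Rle_trans; [apply Rabs_triang |].
    rewrite Rabs_mult, Rabs_mult, Rabs_inv, (Rabs_right 2) by lra.
    nra.
Qed.

Lemma hdist_iL_le (a b c s : R) (p : H) :
  hdist p (iL a b c p) <= 2 * (1 + Rabs a) * hdist p (line_pt a b c s).
Proof.
  unfold hdist. rewrite (hmul_hinv_iL a b c s).
  apply hnorm_hmul_horizontal_shear.
Qed.

Lemma hdist_set_ge (p : H) (S : H -> Prop) (m : R) :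
  (exists q, S q) -> (forall q, S q -> m <= hdist p q) -> m <= hdist_set p S.
Proof.
  intros [q0 Hq0] Hm. unfold hdist_set.
  set (E := fun r => exists q, S q /\ r = hdist p q).
  destruct (Glb_Rbar_correct E) as [Hlb Hglb].
  assert (Hm_lb : is_lb_Rbar E m).
  { intros r [q [Hq ->]]. exact (Hm q Hq). }
  specialize (Hglb m Hm_lb).
  specialize (Hlb (hdist p q0) (ex_intro _ q0 (conj Hq0 eq_refl))).
  destruct (Glb_Rbar E); simpl in *; easy.
Qed.

Theorem lemma4p12 :
  exists A : R, 1 <= A /\
    forall (a b c : R) (p : H),
      hdist p (iL a b c p) <= A * (1 + Rabs a) * hdist_set p (hline a b c).
Proof.
  exists 2. split; [lra |]. intros a b c p.
  assert (Hk : 2 * (1 + Rabs a) > 0) by (pose proof (Rabs_pos a); lra).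
  rewrite (Rmult_comm (2 * (1 + Rabs a))), <- Rle_div_l by exact Hk.
  apply hdist_set_ge.
  - exists (line_pt a b c 0). now exists 0.
  - intros q [s ->]. apply Rle_div_l; [exact Hk |].
    rewrite Rmult_comm. apply hdist_iL_le.
Qed.
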